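(* Let $\sigma:\mathbb{R}\to\mathbb{R}$ be an increasing odd homeomorphism and let $(p_n=(x_n,y_n))_{n\geq0}$ be a sequence in $\mathbb{R}^2$ tending to $0$, such that either all the $x_n$ are nonzero and of the same sign, or all the $y_n$ are nonzero and of the same sign. Then the closure of $\{w(p_n):n\in\mathbb N,\ w\in\mathcal M_\sigma(X)\}$ contains: $Ox_+=\mathbb{R}_{\geq0}\times\{0\}$ if all $y_n>0$; $Ox_-=\mathbb{R}_{\leq0}\times\{0\}$ if all $y_n<0$; $Oy_+=\{0\}\times\mathbb{R}_{\geq0}$ if all $x_n>0$; $Oy_-=\{0\}\times\mathbb{R}_{\leq0}$ if all $x_n<0$.
   Context: $h_\sigma(x,y)=(x+\sigma^{-1}(y),y)$, $v_\sigma(x,y)=(x,\sigma(x)+y)$, and $\mathcal M_\sigma(X)$ is the monoid (containing the identity) generated by $h_\sigma$ and $v_\sigma$ under composition. *)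

From HB Require Import structures.
From mathcomp Require Import all_boot all_order all_algebra.
From mathcomp Require Import all_classical all_reals all_analysis.
Set Implicit Arguments. Unset Strict Implicit. Unset Printing Implicit Defensive.
Import Order.TTheory GRing.Theory Num.Theory.
Import numFieldNormedType.Exports.
Local Open Scope ring_scope.
Local Open Scope classical_set_scope.

Definition hmap {R : realType} (siginv : R -> R) (p : R * R) : R * R :=
  (p.1 + siginv p.2, p.2).

Definition vmap {R : realType} (sigma : R -> R) (p : R * R) : R * R :=
  (p.1, sigma p.1 + p.2).

(* The monoid M_sigma(X) generated by h_sigma and v_sigma under composition
   (containing the identity). *)
Inductive inM {R : realType} (sigma siginv : R -> R) : (R * R -> R * R) -> Prop :=
  | inM_id : inM sigma siginv id
  | inM_h w : inM sigma siginv w -> inM sigma siginv (hmap siginv \o w)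
  | inM_v w : inM sigma siginv w -> inM sigma siginv (vmap sigma \o w).

Definition orbit_set {R : realType} (sigma siginv : R -> R) (p : nat -> R * R)
  : set (R * R) :=
  [set q | exists n w, inM sigma siginv w /\ q = w (p n)].

From HB Require Import structures.
From mathcomp Require Import all_boot all_order all_algebra.
From mathcomp Require Import all_classical all_reals all_analysis.
From mathcomp Require Import ring lra.
Set Implicit Arguments. Unset Strict Implicit. Unset Printing Implicit Defensive.
Import Order.TTheory GRing.Theory Num.Theory.
Import numFieldNormedType.Exports.
Local Open Scope ring_scope.
Local Open Scope classical_set_scope.

(* Iterating h_sigma k times moves p = (x, y) to (x + k sigma^-1(y), y): the
   first coordinate advances by steps sigma^-1(y) that all have the sign of y
   and tend to 0 with p, so the points reachable from p_n fill the half-axis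
   on that side up to an error that vanishes as n grows. The same holds for
   v_sigma, with steps sigma(x), on the vertical half-axes. *)

Lemma approx_by_multiples (R : archiRealFieldType) (a x d e : R) :
  (0 < d /\ 0 <= a) \/ (d < 0 /\ a <= 0) -> `|d| < e -> `|x| < e ->
  exists k : nat, `|x + k%:R * d - a| < e.
Proof.
move=> sgn; wlog [d0 a0] : a x d sgn / 0 < d /\ 0 <= a => [base|].
  case: (sgn) => [pos|[d0 a0]] de xe; first exact: base.
  have pos : 0 < - d /\ 0 <= - a by split; lra.
  rewrite -(normrN d) -(normrN x) in de xe.
  have [k hk] := base (- a) (- x) (- d) (or_introl pos) pos de xe.
  exists k; rewrite -normrN.
  by have -> : - (x + k%:R * d - a) = - x + k%:R * - d - - a by ring.
rewrite gtr0_norm // => de xe.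
have [xa|ax] := leP x a; last first.
  by exists 0%N; rewrite mul0r addr0 gtr0_norm ?subr_gt0 //; have := ler_norm x; lra.
have t0 : 0 <= (a - x) / d by rewrite divr_ge0 ?subr_ge0 // ltW.
have /andP[le_k lt_k1] := truncn_itv t0.
exists (Num.truncn ((a - x) / d)).
rewrite ler_pdivlMr // in le_k; rewrite ltr_pdivrMr // -natr1 mulrDl mul1r in lt_k1.
rewrite ltr_norml; apply/andP; split; lra.
Qed.

Lemma near_approx_by_multiples (R : archiRealFieldType) (u d : nat -> R) (a e : R) :
  u @ \oo --> 0 -> d @ \oo --> 0 ->
  (forall n, (0 < d n /\ 0 <= a) \/ (d n < 0 /\ a <= 0)) -> 0 < e ->
  \forall n \near \oo, exists k : nat, `|u n + k%:R * d n - a| < e.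
Proof.
move=> u0 d0 sgn e0; near=> n; apply: approx_by_multiples; first exact: sgn.
all: near: n; exact: cvgr0_norm_lt.
Unshelve. all: by end_near.
Qed.

Lemma closure_x_axis (R : archiRealFieldType) (A : set (R * R))
    (u c d : nat -> R) (a : R) :
  u @ \oo --> 0 -> c @ \oo --> 0 -> d @ \oo --> 0 ->
  (forall n, (0 < d n /\ 0 <= a) \/ (d n < 0 /\ a <= 0)) ->
  (forall n k, A (u n + k%:R * d n, c n)) -> closure A (a, 0).
Proof.
move=> u0 c0 d0 sgn inA B /nbhs_ballP[e e0 aeB].
have near_steps := near_approx_by_multiples u0 d0 sgn e0.
near \oo => n.
have [k hk] : exists k : nat, `|u n + k%:R * d n - a| < e by near: n.
exists (u n + k%:R * d n, c n); split => //; apply: aeB.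
split; rewrite /= -ball_normE /= ?sub0r ?normrN 1?distrC //.
by near: n; exact: cvgr0_norm_lt.
Unshelve. all: by end_near.
Qed.

Lemma closure_y_axis (R : archiRealFieldType) (A : set (R * R))
    (u c d : nat -> R) (a : R) :
  u @ \oo --> 0 -> c @ \oo --> 0 -> d @ \oo --> 0 ->
  (forall n, (0 < d n /\ 0 <= a) \/ (d n < 0 /\ a <= 0)) ->
  (forall n k, A (c n, u n + k%:R * d n)) -> closure A (0, a).
Proof.
move=> u0 c0 d0 sgn inA B /nbhs_ballP[e e0 aeB].
have near_steps := near_approx_by_multiples u0 d0 sgn e0.
near \oo => n.
have [k hk] : exists k : nat, `|u n + k%:R * d n - a| < e by near: n.
exists (c n, u n + k%:R * d n); split => //; apply: aeB.
split; rewrite /= -ball_normE /= ?sub0r ?normrN 1?distrC //.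
by near: n; exact: cvgr0_norm_lt.
Unshelve. all: by end_near.
Qed.

Lemma inM_iter (R : realType) (sigma siginv : R -> R) (f : R * R -> R * R) :
  (forall w, inM sigma siginv w -> inM sigma siginv (f \o w)) ->
  forall k, inM sigma siginv (iter k f).
Proof. by move=> inM_f; elim=> [|k IH]; [exact: inM_id | exact: inM_f]. Qed.

Lemma iter_hmap (R : realType) (siginv : R -> R) k (q : R * R) :
  iter k (hmap siginv) q = (q.1 + k%:R * siginv q.2, q.2).
Proof.
elim: k => [|k IH] /=; first by rewrite mul0r addr0; case: q.
by rewrite IH /hmap /= -natr1 mulrDl mul1r addrA.
Qed.

Lemma iter_vmap (R : realType) (sigma : R -> R) k (q : R * R) :
  iter k (vmap sigma) q = (q.1, q.2 + k%:R * sigma q.1).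
Proof.
elim: k => [|k IH] /=; first by rewrite mul0r addr0; case: q.
by rewrite IH /vmap /= -natr1 mulrDl mul1r; congr pair; ring.
Qed.

Theorem lemma4 (R : realType) (sigma siginv : R -> R)
  (Hinv1 : cancel sigma siginv) (Hinv2 : cancel siginv sigma)
  (Hcont : continuous sigma) (Hcontinv : continuous siginv)
  (Hincr : forall a b : R, a < b -> sigma a < sigma b)
  (Hodd : forall a : R, sigma (- a) = - sigma a)
  (p : nat -> R * R)
  (Hlim : p @ \oo --> ((0 : R), (0 : R)))
  (Hsign : ((forall n, 0 < (p n).1) \/ (forall n, (p n).1 < 0)) \/
           ((forall n, 0 < (p n).2) \/ (forall n, (p n).2 < 0))) :
  ((forall n, 0 < (p n).2) ->
     [set q : R * R | 0 <= q.1 /\ q.2 = 0] `<=` closure (orbit_set sigma siginv p)) /\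
  ((forall n, (p n).2 < 0) ->
     [set q : R * R | q.1 <= 0 /\ q.2 = 0] `<=` closure (orbit_set sigma siginv p)) /\
  ((forall n, 0 < (p n).1) ->
     [set q : R * R | q.1 = 0 /\ 0 <= q.2] `<=` closure (orbit_set sigma siginv p)) /\
  ((forall n, (p n).1 < 0) ->
     [set q : R * R | q.1 = 0 /\ q.2 <= 0] `<=` closure (orbit_set sigma siginv p)).
Proof.
have sigma0 : sigma 0 = 0 by have := Hodd 0; rewrite oppr0; lra.
have siginv0 : siginv 0 = 0 by rewrite -sigma0 Hinv1.
have sigma_lt : {mono sigma : x y / x < y} := leW_mono (le_mono Hincr).
have siginv_gt0 y : (0 < siginv y) = (0 < y) by rewrite -sigma_lt Hinv2 sigma0.
have siginv_lt0 y : (siginv y < 0) = (y < 0) by rewrite -sigma_lt Hinv2 sigma0.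
have sigma_gt0 x : (0 < sigma x) = (0 < x) by rewrite -[in LHS]sigma0 sigma_lt.
have sigma_lt0 x : (sigma x < 0) = (x < 0) by rewrite -[in LHS]sigma0 sigma_lt.
have x0 : (fun n => (p n).1) @ \oo --> 0 by apply: cvg_comp Hlim _; exact: cvg_fst.
have y0 : (fun n => (p n).2) @ \oo --> 0 by apply: cvg_comp Hlim _; exact: cvg_snd.
have sx0 : (fun n => sigma (p n).1) @ \oo --> 0.
  by rewrite -sigma0; exact: continuous_cvg (Hcont 0) x0.
have sy0 : (fun n => siginv (p n).2) @ \oo --> 0.
  by rewrite -siginv0; exact: continuous_cvg (Hcontinv 0) y0.
have orbit_h n k : orbit_set sigma siginv p (iter k (hmap siginv) (p n)).
  by exists n, (iter k (hmap siginv)); split => //; apply: inM_iter; exact: inM_h.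
have orbit_v n k : orbit_set sigma siginv p (iter k (vmap sigma) (p n)).
  by exists n, (iter k (vmap sigma)); split => //; apply: inM_iter; exact: inM_v.
split; [|split; [|split]] => sgn_p [a b] /= [].
- move=> a0 ->; apply: (closure_x_axis x0 y0 sy0) => [n|n k]; last by rewrite -iter_hmap.
  by left; rewrite siginv_gt0 sgn_p.
- move=> a0 ->; apply: (closure_x_axis x0 y0 sy0) => [n|n k]; last by rewrite -iter_hmap.
  by right; rewrite siginv_lt0 sgn_p.
- move=> -> b0; apply: (closure_y_axis y0 x0 sx0) => [n|n k]; last by rewrite -iter_vmap.
  by left; rewrite sigma_gt0 sgn_p.
- move=> -> b0; apply: (closure_y_axis y0 x0 sx0) => [n|n k]; last by rewrite -iter_vmap.
  by right; rewrite sigma_lt0 sgn_p.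
Qed.
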